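(* Let $n\geq 2$ and $r\geq 1$, and let $\rho$ be a partition of $[n]\times[r]$ such that $\rho\vee\pi=\widehat{1}$, where $\pi=\{\pi_1,\dots,\pi_n\}$ with $\pi_k=\{(k,1),\dots,(k,r)\}$. Then there exists $i\in\{1,\dots,n\}$ such that the set partition $\rho^{(i)}:=\{b\setminus\pi_i : b\in\rho,\ b\not\subset\pi_i\}$ of $(\{1,\dots,n\}\setminus\{i\})\times[r]$ is connected, i.e. $\rho^{(i)}\vee\{\pi_j : j\neq i\}$ is the one-block partition of $(\{1,\dots,n\}\setminus\{i\})\times[r]$.
   Context: $[n]=\{1,\dots,n\}$. For a finite set, $\rho\vee\sigma$ denotes the finest partition coarser than both $\rho$ and $\sigma$, and $\widehat{1}$ denotes the one-block partition. A partition $\rho$ of $\eta\times[r]$ ($\eta\subset[n]$) is called connected if $\rho\vee\{\pi_k:k\in\eta\}$ is the one-block partition of $\eta\times[r]$. *)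

From mathcomp Require Import all_boot.
Set Implicit Arguments. Unset Strict Implicit. Unset Printing Implicit Defensive.

Definition coarser (T : finType) (P Q : {set {set T}}) : Prop :=
  forall B, B \in P -> exists2 C, C \in Q & B \subset C.

Definition is_join (T : finType) (A : {set T}) (P Q J : {set {set T}}) : Prop :=
  [/\ partition J A, coarser P J, coarser Q J &
      forall K : {set {set T}}, partition K A -> coarser P K -> coarser Q K ->
        coarser J K].

(* pi_k = {(k,1),...,(k,r)} inside [n] x [r] (0-indexed: 'I_n * 'I_r). *)
Definition pik (n r : nat) (k : 'I_n) : {set 'I_n * 'I_r} :=
  [set x | x.1 == k].

Definition piset (n r : nat) (eta : {set 'I_n}) : {set {set 'I_n * 'I_r}} :=
  [set pik r k | k in eta].

Definition rows (n r : nat) (eta : {set 'I_n}) : {set 'I_n * 'I_r} :=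
  [set x | x.1 \in eta].

Definition rho_del (n r : nat) (rho : {set {set 'I_n * 'I_r}}) (i : 'I_n)
  : {set {set 'I_n * 'I_r}} :=
  [set b :\: pik r i | b in [set b in rho | ~~ (b \subset pik r i)]].

Definition connected_part (n r : nat) (eta : {set 'I_n})
  (rho : {set {set 'I_n * 'I_r}}) : Prop :=
  is_join (rows r eta) rho (piset r eta) [set rows r eta].

From mathcomp Require Import all_boot.
Set Implicit Arguments. Unset Strict Implicit. Unset Printing Implicit Defensive.

(* Write k ~ l when some block of rho meets both pi_k and pi_l.  The join
   rho \/ {pi_k : k in eta} is one block exactly when every nonempty proper
   subset S of eta has a ~-edge to eta \ S, and deleting pi_i from rho
   induces on eta \ {i} the restriction of ~.  So it suffices that a
   connected graph has a vertex whose deletion leaves it connected.  Take a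
   cut S of the graph minus i with |S| minimal and some j in S: a cut of the
   graph minus j has a side A avoiding i, and A :&: S is a smaller cut of the
   graph minus j.  It is nonempty because in the whole graph an edge leaves
   A, and it can only end at j, which lies in S. *)

Section Cuts.

Variable V : finType.
Implicit Types (e : rel V) (U S A B : {set V}).

Definition linked e A B := [exists x in A, exists y in B, e x y].

Lemma linkedP e A B :
  reflect (exists x y, [/\ x \in A, y \in B & e x y]) (linked e A B).
Proof.
apply: (iffP exists_inP) => [[x xA /exists_inP[y yB exy]] | [x [y [xA yB exy]]]].
  by exists x, y.
by exists x => //; apply/exists_inP; exists y.
Qed.

Definition is_cut e U S :=
  [&& S != set0, S \subset U, U :\: S != set0 & ~~ linked e S (U :\: S)].

Definition connected_set e U := forall S, ~~ is_cut e U S.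

Lemma connected_set_sub e e' U :
  {in U &, forall x y, e x y -> e' x y} -> connected_set e U -> connected_set e' U.
Proof.
move=> ee' connU S; apply: contra (connU S) => /and4P[S0 SU US nlS].
rewrite /is_cut S0 SU US; apply: contra nlS => /linkedP[x [y [xS yUS exy]]].
apply/linkedP; exists x, y; split=> //; apply: ee' exy; first exact: subsetP xS.
by case/setDP: yUS.
Qed.

Lemma connected_set_closed e U S :
  connected_set e U -> S \subset U -> S != set0 -> ~~ linked e S (U :\: S) ->
  U \subset S.
Proof.
move=> connU SU S0 nlS; move: (connU S).
by rewrite /is_cut S0 SU nlS andbT /= negbK setD_eq0.
Qed.

Section Symmetric.

Variable e : rel V.
Hypothesis e_sym : symmetric e.

Lemma linkedC A B : linked e A B = linked e B A.
Proof.
by apply/linkedP/linkedP => -[x [y [xA yB exy]]]; exists y, x; rewrite e_sym.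
Qed.

Lemma is_cutC U S : is_cut e U S -> is_cut e U (U :\: S).
Proof.
case/and4P=> S0 SU US nlS; rewrite /is_cut.
have -> : U :\: (U :\: S) = S by rewrite setDDr setDv set0U; apply/setIidPr.
by rewrite US subsetDl S0 linkedC.
Qed.

Lemma cut_avoiding U S i : is_cut e U S -> exists2 A, is_cut e U A & i \notin A.
Proof.
move=> cutS; have [iS | iNS] := boolP (i \in S); last by exists S.
by exists (U :\: S); [apply: is_cutC | rewrite inE iS].
Qed.

Lemma cut_side_meets U S A i j :
  connected_set e U -> is_cut e (U :\ i) S -> j \in S ->
  is_cut e (U :\ j) A -> i \notin A -> A :&: S != set0.
Proof.
move=> connU /and4P[_ SUi _ nlS] jS /and4P[A0 AUj _ nlA] iA; apply/eqP => AS0.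
have jA : j \notin A by apply/negP => /(subsetP AUj)/setD1P[/eqP].
have AU : A \subset U by apply: subset_trans AUj (subsetDl _ _).
have /negP[] : ~~ (U \subset A).
  by apply: contraNN jA => /subsetP; apply; case/setD1P: (subsetP SUi j jS).
apply: connected_set_closed connU AU A0 _; apply/linkedP.
move=> [x [y [xA /setDP[yU yA] exy]]].
have [yj | yj] := eqVneq y j; last first.
  by move/negP: nlA; apply; apply/linkedP; exists x, y; rewrite !inE yj yU yA.
have xS : x \notin S.
  by apply/negP => xS; have := in_set0 x; rewrite -AS0 inE xA xS.
have /setD1P[_ xU] := subsetP AUj x xA.
have xi : x != i by apply: contraNneq iA => <-.
move/negP: nlS; apply; apply/linkedP; exists y, x.
by split; [rewrite yj | rewrite !inE xi xU xS | rewrite e_sym].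
Qed.

Lemma smaller_cut U S T i j :
  connected_set e U -> i \in U -> is_cut e (U :\ i) S -> j \in S ->
  is_cut e (U :\ j) T -> exists2 S', is_cut e (U :\ j) S' & #|S'| < #|S|.
Proof.
move=> connU iU cutS jS /(cut_avoiding i)[A cutA iA].
have AS := cut_side_meets connU cutS jS cutA iA.
case/and4P: cutS => _ SUi _ nlS; case/and4P: cutA => _ AUj _ nlA.
have /setD1P[ji _] := subsetP SUi j jS.
have jA : j \notin A by apply/negP => /(subsetP AUj)/setD1P[/eqP].
exists (A :&: S); last first.
  apply: proper_card; apply/properP; split; first exact: subsetIr.
  by exists j; rewrite // inE (negbTE jA).
rewrite /is_cut AS (subset_trans (subsetIl _ _) AUj) /=; apply/andP; split.
  by apply/set0Pn; exists i; rewrite !inE (negbTE iA) eq_sym ji iU.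
apply/linkedP => -[x [y [/setIP[xA xS] /setDP[/setD1P[yj yU] yAS] exy]]].
have [yA | yA] := boolP (y \in A); last first.
  by move/negP: nlA; apply; apply/linkedP; exists x, y; rewrite !inE yj yU yA.
have yS : y \notin S by apply: contra yAS => yS; apply/setIP.
have yi : y != i by apply: contraNneq iA => <-.
by move/negP: nlS; apply; apply/linkedP; exists x, y; rewrite !inE yi yU yS.
Qed.

Theorem exists_noncut_vertex U :
  U != set0 -> connected_set e U -> exists2 i, i \in U & connected_set e (U :\ i).
Proof.
move=> /set0Pn[i0 i0U] connU.
have [/exists_inP[i iU /forallP noCut] | hasCut] :=
  boolP [exists i in U, [forall S, ~~ is_cut e (U :\ i) S]].
  by exists i.
have {}hasCut i : i \in U -> exists S, is_cut e (U :\ i) S.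
  move=> iU; move/exists_inPn: hasCut => /(_ i iU).
  by rewrite negb_forall => /existsP[S /negPn]; exists S.
pose cut_size m : bool := [exists i in U, exists S, is_cut e (U :\ i) S && (#|S| == m)].
have cut_sizeP i S : i \in U -> is_cut e (U :\ i) S -> cut_size #|S|.
  move=> iU cutS; apply/exists_inP; exists i => //=.
  by apply/existsP; exists S; rewrite cutS eqxx.
have [S cutS] := hasCut i0 i0U.
case: (ex_minnP (ex_intro cut_size _ (cut_sizeP i0 S i0U cutS))).
move=> _ /exists_inP[i iU /existsP[{}S /andP[{}cutS /eqP <-]]] minS.
have /set0Pn[j jS] : S != set0 by case/and4P: cutS.
have /setD1P[_ jU] : j \in U :\ i by case/and4P: cutS => _ /subsetP->.
have [T cutT] := hasCut j jU.
have [S' cutS' ltS'] := smaller_cut connU iU cutS jS cutT.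
by have := minS _ (cut_sizeP j S' jU cutS'); rewrite leqNgt ltS'.
Qed.

End Symmetric.
End Cuts.

Section Partitions.

Variable T : finType.
Implicit Types (A B C : {set T}) (P Q K : {set {set T}}).

Lemma coarser_block_sub A Q K B C x :
  partition K A -> coarser Q K -> B \in Q -> C \in K -> x \in B -> x \in C ->
  B \subset C.
Proof.
case/and3P=> _ tK _ QK BQ CK xB xC; have [C' C'K BC'] := QK B BQ.
by rewrite -(def_pblock tK CK xC) (def_pblock tK C'K (subsetP BC' x xB)).
Qed.

Lemma mem_pblock_preim (rT : eqType) (f : T -> rT) A x y :
  x \in A -> y \in A -> (y \in pblock (preim_partition f A) x) = (f x == f y).
Proof.
by apply: pblock_equivalence_partition => // ? ? ? _ _ _; split=> // /eqP->.
Qed.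

Lemma coarser_preim_partition (rT : eqType) (f : T -> rT) A P :
  A != set0 -> coarser P [set A] ->
  {in P, forall B, {in B &, forall x y, f x = f y}} ->
  coarser P (preim_partition f A).
Proof.
move=> /set0Pn[a aA] PA fP B BP; have [_ /set1P-> BA] := PA B BP.
have /and3P[/eqP covK _ _] := preim_partitionP f A.
have [-> | [x xB]] := set_0Vmem B.
  by exists (pblock (preim_partition f A) a); rewrite ?sub0set ?pblock_mem ?covK.
exists (pblock (preim_partition f A) x).
  by rewrite pblock_mem ?covK ?(subsetP BA).
by apply/subsetP => y yB; rewrite mem_pblock_preim ?(subsetP BA) ?(fP B BP x y).
Qed.

Lemma is_join1_const (rT : eqType) (f : T -> rT) A P Q :
  is_join A P Q [set A] ->
  {in P, forall B, {in B &, forall x y, f x = f y}} ->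
  {in Q, forall B, {in B &, forall x y, f x = f y}} ->
  {in A &, forall x y, f x = f y}.
Proof.
case=> /and3P[_ _ A0] PA QA minA fP fQ x y xA yA.
have {}A0 : A != set0 by apply: contraNneq A0 => <-; rewrite set11.
have [C CK AC] := minA _ (preim_partitionP f A) (coarser_preim_partition A0 PA fP)
  (coarser_preim_partition A0 QA fQ) A (set11 A).
have /and3P[_ tK _] := preim_partitionP f A.
apply/eqP; rewrite -(mem_pblock_preim f xA yA) (def_pblock tK CK (subsetP AC x xA)).
exact: subsetP AC y yA.
Qed.

End Partitions.

Section Rows.

Variables n r : nat.
Implicit Types (eta : {set 'I_n}) (rho : {set {set 'I_n * 'I_r}}).

Definition row_adj rho : rel 'I_n :=
  fun k l => [exists b in rho, exists x in b, exists y in b, (x.1 == k) && (y.1 == l)].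

Lemma row_adjP rho k l :
  reflect (exists b x y, [/\ b \in rho, x \in b, y \in b, x.1 = k & y.1 = l])
          (row_adj rho k l).
Proof.
apply: (iffP exists_inP) => [[b bP /exists_inP[x xb /exists_inP[y yb]]] |
                            [b [x [y [bP xb yb xk yl]]]]].
  by case/andP=> /eqP xk /eqP yl; exists b, x, y.
exists b => //; apply/exists_inP; exists x => //; apply/exists_inP; exists y => //.
by rewrite xk yl !eqxx.
Qed.

Lemma row_adj_sym rho : symmetric (row_adj rho).
Proof.
by move=> k l; apply/row_adjP/row_adjP => -[b [x [y [bP xb yb xk yl]]]]; exists b, y, x.
Qed.

Lemma rowsT : rows r [set: 'I_n] = setT.
Proof. by apply/setP => x; rewrite !inE. Qed.

Lemma connected_part_connected_set eta rho :
  0 < r -> connected_part eta rho -> connected_set (row_adj rho) eta.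
Proof.
move=> r_gt0 conn S; apply/negP => /and4P[/set0Pn[s sS] Seta /set0Pn[t tS] nlS].
pose c0 := Ordinal r_gt0.
have rho_rows b : b \in rho -> b \subset rows r eta.
  by case: conn => _ rhoJ _ _ /rhoJ[_ /set1P->].
pose f (x : 'I_n * 'I_r) := x.1 \in S.
have fP : {in rho, forall b : {set _}, {in b &, forall x y, f x = f y}}.
  move=> b bP x y xb yb.
  have link u v : u \in b -> v \in b -> u.1 \in S -> v.1 \notin S -> False.
    move=> ub vb uS vS; move/negP: nlS; apply; apply/linkedP.
    exists u.1, v.1; split=> //; last by apply/row_adjP; exists b, u, v.
    by rewrite inE vS; have := subsetP (rho_rows b bP) v vb; rewrite inE.
  rewrite /f; case: (boolP (x.1 \in S)) (boolP (y.1 \in S)) => [xS|xS] [yS|yS] //.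
    by case: (link x y).
  by case: (link y x).
have fQ : {in piset r eta, forall B : {set _}, {in B &, forall x y, f x = f y}}.
  by move=> _ /imsetP[k _ ->] x y; rewrite !inE /f => /eqP-> /eqP->.
move: tS; rewrite inE => /andP[tS tEta].
have := is_join1_const conn fP fQ (x := (s, c0)) (y := (t, c0)).
by rewrite /f /= sS (negbTE tS) !inE (subsetP Seta) // tEta => /(_ isT isT).
Qed.

Lemma connected_set_connected_part eta rho :
  0 < r -> eta != set0 -> partition rho (rows r eta) ->
  connected_set (row_adj rho) eta -> connected_part eta rho.
Proof.
move=> r_gt0 /set0Pn[j0 j0eta] /and3P[/eqP cov _ _] conn.
pose c0 := Ordinal r_gt0.
split.
- apply/and3P; split; [by rewrite cover1 | exact: trivIset1 |].
  by rewrite in_set1 eq_sym; apply/set0Pn; exists (j0, c0); rewrite inE.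
- by move=> b bP; exists (rows r eta); rewrite ?set11 // -cov; apply: bigcup_sup.
- move=> _ /imsetP[k keta ->]; exists (rows r eta); rewrite ?set11 //.
  by apply/subsetP => x; rewrite !inE => /eqP->.
move=> K PK rhoK piK _ /set1P->.
have /and3P[/eqP covK _ _] := PK.
pose C := pblock K (j0, c0).
have CK : C \in K by rewrite pblock_mem ?covK ?inE.
have pikC k x : k \in eta -> x.1 = k -> x \in C -> pik r k \subset C.
  move=> keta xk xC; apply: coarser_block_sub PK piK _ CK _ xC; first exact: imset_f.
  by rewrite inE xk.
exists C => //.
pose S := [set k in eta | pik r k \subset C].
have etaS : eta \subset S.
  apply: connected_set_closed conn _ _ _.
  - by apply/subsetP => k; rewrite inE => /andP[].
  - apply/set0Pn; exists j0; rewrite inE j0eta (pikC j0 (j0, c0)) //.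
    by rewrite mem_pblock covK inE.
  apply/linkedP => -[k [l [/setIdP[keta kC] /setDP[leta lS]]]].
  case/row_adjP=> b [x [y [bP xb yb xk yl]]].
  have bC : b \subset C.
    by apply: coarser_block_sub PK rhoK bP CK xb _; apply: (subsetP kC); rewrite inE xk.
  by move/negP: lS; apply; rewrite inE leta (pikC l y) // (subsetP bC).
apply/subsetP => x; rewrite inE => /(subsetP etaS); rewrite inE => /andP[_ /subsetP].
by apply; rewrite inE.
Qed.

Lemma rho_del_partition rho i :
  partition rho setT -> partition (rho_del rho i) (rows r [set~ i]).
Proof.
case/and3P=> /eqP cov tr rho0; apply/and3P; split.
- apply/eqP/setP => x; apply/bigcupP/idP.
    by case=> _ /imsetP[b _ ->]; rewrite !inE => /andP[].
  rewrite !inE => xi.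
  have xc : x \in cover rho by rewrite cov.
  exists (pblock rho x :\: pik r i); last by rewrite !inE xi mem_pblock xc.
  apply: imset_f; rewrite inE pblock_mem //=.
  by apply/subsetP => /(_ x); rewrite mem_pblock xc inE (negbTE xi) => /(_ isT).
- apply/trivIsetP => _ _ /imsetP[b1 /setIdP[b1P _] ->] /imsetP[b2 /setIdP[b2P _] ->] ne.
  have ne' : b1 != b2 by apply: contraNneq ne => ->.
  apply: disjointWl (subsetDl _ _) _; apply: disjointWr (subsetDl _ _) _.
  exact: (trivIsetP tr).
apply/imsetP => -[b /setIdP[_ nsub] /eqP]; rewrite eq_sym setD_eq0.
exact/negP.
Qed.

Lemma row_adj_del rho i k l :
  k != i -> l != i -> row_adj rho k l -> row_adj (rho_del rho i) k l.
Proof.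
move=> ki li /row_adjP[b [x [y [bP xb yb xk yl]]]]; apply/row_adjP.
exists (b :\: pik r i), x, y; rewrite !inE xk yl ki li xb yb; split=> //.
apply: imset_f; rewrite inE bP; apply/subsetP => /(_ x xb).
by rewrite inE xk (negbTE ki).
Qed.

End Rows.

Theorem lemma2p6 (n r : nat) (hn : 2 <= n) (hr : 1 <= r)
  (rho : {set {set 'I_n * 'I_r}}) :
  partition rho [set: 'I_n * 'I_r] ->
  is_join [set: 'I_n * 'I_r] rho (piset r [set: 'I_n]) [set [set: 'I_n * 'I_r]] ->
  exists i : 'I_n,
    partition (rho_del rho i) (rows r [set~ i]) /\
    connected_part [set~ i] (rho_del rho i).
Proof.
move=> Prho join.
have conn : connected_set (row_adj rho) setT.
  by apply: connected_part_connected_set hr _; rewrite /connected_part rowsT.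
have nT : [set: 'I_n] != set0 by apply/set0Pn; exists (Ordinal (ltnW hn)).
have [i _] := exists_noncut_vertex (@row_adj_sym n r rho) nT conn.
rewrite setTD => conn_i.
have Pi := rho_del_partition i Prho.
exists i; split=> //; apply: connected_set_connected_part hr _ Pi _.
  by rewrite -card_gt0 cardsC1 card_ord -subn1 subn_gt0.
by apply: connected_set_sub conn_i => k l; rewrite !inE; apply: row_adj_del.
Qed.
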